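(* Assume $\bar p=\mu\cdot\mathbf p=1/2$ and let $\eta$ be any distribution on $\mathcal R$. With $\mathbf r,\tilde{\mathbf r},\nu,\tilde\nu,\delta,\tilde\delta$ as in the context, $\nu=\tilde\nu$ and $\delta+\tilde\delta=1-2/\nu$.
   Context: Let $\mathcal R=\{1,\dots,N\}$ and let $K$ be a stochastic matrix on $\mathcal R$ whose Markov chain has a unique closed irreducible subset; let $\mu$ (row vector) be its unique stationary distribution. Fix $p:\mathcal R\to(0,1)$, $\mathbf p=(p(1),\dots,p(N))^t$, $\mathbf 1$ the all-ones column vector, $I$ the identity, $D_p$ the diagonal matrix with entries $p(i)$, $D_{1-p}=I-D_p$. Define $\mathbf r=(I-K+2(\mathbf 1-\mathbf p)\mu D_{1-p}K)^{-1}\mathbf p-\mathbf 1$, $\tilde{\mathbf r}=(I-K+2\mathbf p\,\mu D_pK)^{-1}(\mathbf 1-\mathbf p)-\mathbf 1$, $\nu=2+4\mu D_pK\mathbf r$, $\tilde\nu=2+4\mu D_{1-p}K\tilde{\mathbf r}$, $\delta=2\,\eta\cdot\mathbf r/\nu$, $\tilde\delta=2\,\eta\cdot\tilde{\mathbf r}/\tilde\nu$. *)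

From mathcomp Require Import all_boot all_order all_algebra.
Set Implicit Arguments. Unset Strict Implicit. Unset Printing Implicit Defensive.
Import Order.TTheory GRing.Theory Num.Theory.
Local Open Scope ring_scope.

Section MC.
Variables (R : realFieldType) (n : nat).

Definition stochastic (K : 'M[R]_n) : Prop :=
  (forall i j, 0 <= K i j) /\ (forall i, \sum_j K i j = 1).

Definition trans_rel (K : 'M[R]_n) : rel 'I_n := fun i j => 0 < K i j.

Definition closed_set (K : 'M[R]_n) (C : {set 'I_n}) : Prop :=
  forall i j, i \in C -> 0 < K i j -> j \in C.

Definition closed_irreducible (K : 'M[R]_n) (C : {set 'I_n}) : Prop :=
  C != set0 /\ closed_set K C /\
  (forall i j, i \in C -> j \in C -> connect (trans_rel K) i j).

Definition unique_closed_irreducible (K : 'M[R]_n) : Prop :=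
  exists C, closed_irreducible K C /\
            forall C', closed_irreducible K C' -> C' = C.

Definition distribution (m : 'rV[R]_n) : Prop :=
  (forall i, 0 <= m 0 i) /\ \sum_i m 0 i = 1.

Definition stationary (K : 'M[R]_n) (mu : 'rV[R]_n) : Prop :=
  distribution mu /\ mu *m K = mu.

Definition onesv : 'cV[R]_n := const_mx 1.
Definition pvec (p : 'I_n -> R) : 'cV[R]_n := \col_i p i.
Definition Dp (p : 'I_n -> R) : 'M[R]_n := diag_mx (\row_i p i).
Definition D1p (p : 'I_n -> R) : 'M[R]_n := diag_mx (\row_i (1 - p i)).

Definition rvec (K : 'M[R]_n) (mu : 'rV[R]_n) (p : 'I_n -> R) : 'cV[R]_n :=
  invmx (1%:M - K + 2%:R *: ((onesv - pvec p) *m mu *m D1p p *m K))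
    *m pvec p - onesv.

Definition rtvec (K : 'M[R]_n) (mu : 'rV[R]_n) (p : 'I_n -> R) : 'cV[R]_n :=
  invmx (1%:M - K + 2%:R *: (pvec p *m mu *m Dp p *m K))
    *m (onesv - pvec p) - onesv.

Definition nu (K : 'M[R]_n) (mu : 'rV[R]_n) (p : 'I_n -> R) : R :=
  2 + 4 * (mu *m Dp p *m K *m rvec K mu p) 0 0.

Definition nut (K : 'M[R]_n) (mu : 'rV[R]_n) (p : 'I_n -> R) : R :=
  2 + 4 * (mu *m D1p p *m K *m rtvec K mu p) 0 0.

Definition delta (K : 'M[R]_n) (mu eta : 'rV[R]_n) (p : 'I_n -> R) : R :=
  2 * (eta *m rvec K mu p) 0 0 / nu K mu p.

Definition deltat (K : 'M[R]_n) (mu eta : 'rV[R]_n) (p : 'I_n -> R) : R :=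
  2 * (eta *m rtvec K mu p) 0 0 / nut K mu p.

End MC.

From mathcomp Require Import all_boot all_order all_algebra.
From mathcomp Require Import ring lra.
Set Implicit Arguments. Unset Strict Implicit. Unset Printing Implicit Defensive.
Import Order.TTheory GRing.Theory Num.Theory.
Local Open Scope ring_scope.

(* Let x and y solve (I - K + 2 q mu D_q K) v = 1 - q for q = 1 - p and q = p,
   so that r = x - 1 and r~ = y - 1.  Since mu K = mu and mu q = 1/2, the row
   vector mu (I - K + 2 q mu D_q K) is mu D_q K; hence mu D_q K v = mu (1 - q)
   = 1/2 and v - K v = 1 - 2q.  The same identity shows that a kernel vector
   is K-harmonic, hence constant (K has a single closed class), hence zero, so
   these matrices are invertible.  Now x + y is K-harmonic, so x + y = c 1, and
   nu, nut and eta (r + r~) are affine in c: nu = nut = 2c - 2 and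
   eta (r + r~) = c - 2.  Finally nut = 4 mu D_(1-p) K y > 0 by Jensen's
   inequality (K y)^2 <= K (y^2) integrated against mu, so that
   delta + delta~ = 2 (c - 2) / nu = 1 - 2 / nu. *)

Section Entries.
Variables (R : realFieldType) (n : nat).
Local Notation ones := (onesv R n).

Lemma entryD m k (A B : 'M[R]_(m, k)) i j : (A + B) i j = A i j + B i j.
Proof. by rewrite mxE. Qed.

Lemma entryB m k (A B : 'M[R]_(m, k)) i j : (A - B) i j = A i j - B i j.
Proof. by rewrite !mxE. Qed.

Lemma entryZ m k a (A : 'M[R]_(m, k)) i j : (a *: A) i j = a * A i j.
Proof. by rewrite mxE. Qed.

Lemma pvec_1B (p : 'I_n -> R) : pvec (fun i => 1 - p i) = ones - pvec p.
Proof. by apply/matrixP=> i j; rewrite !mxE. Qed.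

Lemma Dp_mul_ones (p : 'I_n -> R) : Dp p *m ones = pvec p.
Proof. by apply/matrixP=> i j; rewrite mul_diag_mx !mxE mulr1. Qed.

Lemma rv_diag_cv (m : 'rV[R]_n) (f : 'I_n -> R) (v : 'cV[R]_n) :
  (m *m diag_mx (\row_i f i) *m v) 0 0 = \sum_i m 0 i * f i * v i 0.
Proof.
by rewrite -mulmxA mxE; apply: eq_bigr => i _; rewrite mul_diag_mx !mxE mulrA.
Qed.

Lemma distribution_mul_ones (m : 'rV[R]_n) : distribution m -> (m *m ones) 0 0 = 1.
Proof.
by case=> _ msum; rewrite mxE -[RHS]msum; apply: eq_bigr => i _; rewrite mxE mulr1.
Qed.

Lemma distribution_weighted_gt0 (m : 'rV[R]_n) (f : 'I_n -> R) :
  distribution m -> (forall i, 0 < f i) -> 0 < \sum_i m 0 i * f i.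
Proof.
case=> m_ge0 m_sum f_gt0.
have /hasP[i _ /andP[_ m_i]] : has (fun i => true && (0 < m 0 i)) (index_enum 'I_n).
  by rewrite -psumr_neq0 // m_sum oner_neq0.
rewrite (bigD1 i) //= ltr_wpDr ?mulr_gt0 // sumr_ge0 // => j _.
by rewrite mulr_ge0 // ltW.
Qed.

End Entries.

Section HarmonicVectors.
Variables (R : realFieldType) (n : nat) (K : 'M[R]_n).

Lemma closed_set_connect (S : {set 'I_n}) i j :
  closed_set K S -> i \in S -> connect (trans_rel K) i j -> j \in S.
Proof.
move=> clS + /connectP[s]; elim: s i => [|k s IHs] i iS /=; first by move=> _ ->.
by case/andP=> Kik /IHs; apply; apply: clS Kik.
Qed.

Lemma closed_set_sub_irreducible (S : {set 'I_n}) :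
  closed_set K S -> S != set0 -> exists2 C, closed_irreducible K C & C \subset S.
Proof.
move=> clS /set0Pn[i0 i0S].
pose reach i := [set j | connect (trans_rel K) i j].
have [i iS min_i] := arg_minnP (fun i => #|reach i|) i0S.
have reach_trans j k : j \in reach i -> k \in reach j -> k \in reach i.
  by rewrite !inE; apply: connect_trans.
exists (reach i); last first.
  by apply/subsetP=> j; rewrite inE; exact: closed_set_connect clS iS.
split; first by apply/set0Pn; exists i; rewrite inE connect0.
split=> [j k ij Kjk|j k ij ik].
  by apply: reach_trans ij _; rewrite inE connect1.
have jS : j \in S by rewrite inE in ij; exact: closed_set_connect clS iS ij.
have sub_ji : reach j \subset reach i by apply/subsetP=> k'; apply: reach_trans.
have eq_ji : reach j = reach i.
  by apply/eqP; rewrite eqEcard sub_ji min_i.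
have : i \in reach j by rewrite eq_ji inE connect0.
by rewrite inE => ji; rewrite inE in ik; apply: connect_trans ji ik.
Qed.

Hypothesis Kst : stochastic K.

Lemma stochastic_mul_ones : K *m onesv R n = onesv R n.
Proof.
case: Kst => _ Ksum; apply/matrixP=> i j; rewrite !mxE.
by under eq_bigr do rewrite mxE mulr1.
Qed.

Lemma stochastic_sqr_le (x : 'cV[R]_n) i :
  (K *m x) i 0 ^+ 2 <= (K *m map_mx (fun a => a ^+ 2) x) i 0.
Proof.
case: Kst => K_ge0 Ksum; set z := (K *m x) i 0.
have z_avg : z = \sum_j K i j * x j 0 by rewrite /z mxE.
have : 0 <= \sum_j K i j * (x j 0 - z) ^+ 2.
  by apply: sumr_ge0 => j _; rewrite mulr_ge0 ?sqr_ge0.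
have expand j : K i j * (x j 0 - z) ^+ 2 =
    K i j * x j 0 ^+ 2 - 2 * z * (K i j * x j 0) + z ^+ 2 * K i j by ring.
under eq_bigr do rewrite expand.
rewrite big_split sumrB /= -!mulr_sumr -z_avg Ksum.
have -> : (K *m map_mx (fun a => a ^+ 2) x) i 0 = \sum_j K i j * x j 0 ^+ 2.
  by rewrite mxE; apply: eq_bigr => j _; rewrite mxE.
lra.
Qed.

Lemma harmonic_argmax_closed (x : 'cV[R]_n) :
  K *m x = x -> closed_set K [set i | [forall k, x k 0 <= x i 0]].
Proof.
case: Kst => K_ge0 Ksum Kx i k; rewrite !inE => /forallP x_le_xi Kik.
have xi_avg : x i 0 = \sum_j K i j * x j 0 by rewrite -{1}Kx mxE.
have : \sum_j K i j * (x i 0 - x j 0) == 0.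
  under eq_bigr do rewrite mulrBr.
  by rewrite sumrB -mulr_suml Ksum mul1r -xi_avg subrr.
rewrite psumr_eq0 => [/allP/(_ k (mem_index_enum _))|j _]; last first.
  by rewrite mulr_ge0 ?subr_ge0.
rewrite implyTb mulf_eq0 (gt_eqF Kik) subr_eq0 => /eqP xik.
by apply/forallP=> l; rewrite -xik.
Qed.

Lemma harmonic_le_on_irreducible (x : 'cV[R]_n) (C : {set 'I_n}) :
  (forall C', closed_irreducible K C' -> C' = C) -> K *m x = x ->
  forall i j, i \in C -> x j 0 <= x i 0.
Proof.
move=> uniqC Kx i j iC.
set S := [set i | [forall k, x k 0 <= x i 0]].
have S_neq0 : S != set0.
  apply/set0Pn; exists [arg max_(m > i) x m 0]%O; rewrite inE.
  by case: arg_maxP => // m _ m_max; apply/forallP=> k; apply: m_max.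
have [C' irrC' subC'] := closed_set_sub_irreducible (harmonic_argmax_closed Kx) S_neq0.
rewrite (uniqC _ irrC') in subC'.
by have := subsetP subC' i iC; rewrite inE => /forallP.
Qed.

Hypothesis Kuci : unique_closed_irreducible K.

Lemma harmonic_const (x : 'cV[R]_n) : K *m x = x -> exists c, x = c *: onesv R n.
Proof.
move=> Kx; have [C [[/set0Pn[i0 i0C] _] uniqC]] := Kuci.
have KNx : K *m - x = - x by rewrite mulmxN Kx.
exists (x i0 0); apply/matrixP=> j k; rewrite ord1 !mxE mulr1.
apply/eqP; rewrite eq_le (harmonic_le_on_irreducible uniqC Kx j i0C).
by have := harmonic_le_on_irreducible uniqC KNx j i0C; rewrite !mxE lerN2.
Qed.

End HarmonicVectors.

Section PerturbedMatrix.
Variables (R : realFieldType) (n : nat) (K : 'M[R]_n) (mu : 'rV[R]_n).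
Local Notation ones := (onesv R n).

Definition perturbed_mx (q : 'I_n -> R) : 'M[R]_n :=
  1%:M - K + 2%:R *: (pvec q *m mu *m Dp q *m K).

Definition perturbed_sol (q : 'I_n -> R) : 'cV[R]_n :=
  invmx (perturbed_mx q) *m (ones - pvec q).

Lemma perturbed_mxE q (x : 'cV[R]_n) : perturbed_mx q *m x =
  x - K *m x + (2 * (mu *m Dp q *m K *m x) 0 0) *: pvec q.
Proof.
rewrite /perturbed_mx mulmxDl mulmxBl mul1mx -scalemxAl -scalerA.
have -> : pvec q *m mu *m Dp q *m K *m x = pvec q *m (mu *m Dp q *m K *m x).
  by rewrite !mulmxA.
by rewrite {1}[mu *m _ *m _ *m x]mx11_scalar mul_mx_scalar.
Qed.

Hypotheses (Kst : stochastic K) (Kuci : unique_closed_irreducible K).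
Hypothesis mu_st : stationary K mu.

(* "weight" below refers to the scalar (mu *m Dp q *m K *m v) 0 0. *)
Lemma weight_ones q : (mu *m Dp q *m K *m ones) 0 0 = (mu *m pvec q) 0 0.
Proof. by rewrite -!mulmxA stochastic_mul_ones // Dp_mul_ones. Qed.

Lemma stationary_sqr_le (x : 'cV[R]_n) :
  \sum_i mu 0 i * (K *m x) i 0 ^+ 2 <= \sum_i mu 0 i * x i 0 ^+ 2.
Proof.
have [[mu_ge0 _] muK] := mu_st.
set x2 := map_mx (fun a => a ^+ 2) x.
have -> : \sum_i mu 0 i * x i 0 ^+ 2 = (mu *m (K *m x2)) 0 0.
  by rewrite mulmxA muK mxE; apply: eq_bigr => i _; rewrite mxE.
rewrite mxE; apply: ler_sum => i _.
by rewrite ler_wpM2l ?stochastic_sqr_le.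
Qed.

Variable q : 'I_n -> R.
Hypothesis mu_q : (mu *m pvec q) 0 0 = 1 / 2.

Lemma stationary_mul_perturbed_mx : mu *m perturbed_mx q = mu *m Dp q *m K.
Proof.
have [_ muK] := mu_st.
rewrite /perturbed_mx mulmxDr mulmxBr mulmx1 muK subrr add0r -scalemxAr !mulmxA.
rewrite [mu *m pvec q]mx11_scalar mu_q mul_scalar_mx -!scalemxAl scalerA.
by rewrite div1r mulfV ?scale1r // pnatr_eq0.
Qed.

Lemma perturbed_weight (x : 'cV[R]_n) :
  (mu *m Dp q *m K *m x) 0 0 = (mu *m (perturbed_mx q *m x)) 0 0.
Proof. by rewrite mulmxA stationary_mul_perturbed_mx. Qed.

Lemma perturbed_mx_inj (x : 'cV[R]_n) : perturbed_mx q *m x = 0 -> x = 0.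
Proof.
move=> Mx0.
have w0 : (mu *m Dp q *m K *m x) 0 0 = 0.
  by rewrite perturbed_weight Mx0 mulmx0 mxE.
have Kx : K *m x = x.
  by move/eqP: Mx0; rewrite perturbed_mxE w0 mulr0 scale0r addr0 subr_eq0 => /eqP.
have [c xE] := harmonic_const Kst Kuci Kx.
move: w0; rewrite xE -scalemxAr entryZ weight_ones mu_q => /eqP.
by rewrite mulf_eq0 div1r invr_eq0 pnatr_eq0 orbF => /eqP ->; rewrite scale0r.
Qed.

Lemma perturbed_mx_unit : perturbed_mx q \in unitmx.
Proof.
rewrite -unitmx_tr -row_free_unit; apply: inj_row_free => v vM0.
apply: trmx_inj; rewrite trmx0; apply: perturbed_mx_inj.
by rewrite -[perturbed_mx q]trmxK -trmx_mul vM0 trmx0.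
Qed.

Lemma perturbed_solP : perturbed_mx q *m perturbed_sol q = ones - pvec q.
Proof. exact: mulKVmx perturbed_mx_unit _. Qed.

Lemma perturbed_sol_weight : (mu *m Dp q *m K *m perturbed_sol q) 0 0 = 1 / 2.
Proof.
have [mu_distr _] := mu_st.
rewrite perturbed_weight perturbed_solP mulmxBr entryB distribution_mul_ones // mu_q.
lra.
Qed.

Lemma perturbed_sol_defect :
  perturbed_sol q - K *m perturbed_sol q = ones - pvec q *+ 2.
Proof.
move: perturbed_solP; rewrite perturbed_mxE perturbed_sol_weight => /(canRL (addrK _)) ->.
by rewrite div1r mulfV ?pnatr_eq0 // scale1r mulr2n opprD addrA.
Qed.

Lemma perturbed_sol_gt0 : (forall i, 0 < q i < 1) ->
  0 < (mu *m D1p q *m K *m perturbed_sol q) 0 0.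
Proof.
move=> q01; have [[_ mu_sum] _] := mu_st.
set x := perturbed_sol q; set z := K *m x.
have xE i : x i 0 = z i 0 + (1 - 2 * q i).
  have := congr1 (fun A : 'cV[R]_n => A i 0) perturbed_sol_defect.
  by rewrite -/x -/z !mxE mulr2n; lra.
have weight : \sum_i mu 0 i * q i * z i 0 = 1 / 2.
  by rewrite -perturbed_sol_weight -mulmxA rv_diag_cv.
have var_gt0 : 0 < \sum_i mu 0 i * (q i * (1 - q i)).
  apply: distribution_weighted_gt0 (mu_st.1) _ => i.
  by have /andP[q_gt0 q_lt1] := q01 i; rewrite mulr_gt0 ?subr_gt0.
have gap : \sum_i mu 0 i * x i 0 ^+ 2 - \sum_i mu 0 i * z i 0 ^+ 2 =
    2 * \sum_i mu 0 i * (1 - q i) * z i 0 - 4 * \sum_i mu 0 i * (q i * (1 - q i)).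
  rewrite -sumrB; transitivity (\sum_i (2 * (mu 0 i * (1 - q i) * z i 0)
      - 4 * (mu 0 i * (q i * (1 - q i))) + (mu 0 i - 2 * (mu 0 i * q i * z i 0)))).
    by apply: eq_bigr => i _; rewrite xE; ring.
  by rewrite big_split /= !sumrB -!mulr_sumr mu_sum weight; field.
have := stationary_sqr_le x; rewrite -/z -mulmxA rv_diag_cv.
lra.
Qed.

End PerturbedMatrix.

Section ComplementarySolutions.
Variables (R : realFieldType) (n : nat) (K : 'M[R]_n) (mu : 'rV[R]_n) (p : 'I_n -> R).
Hypotheses (Kst : stochastic K) (Kuci : unique_closed_irreducible K).
Hypotheses (mu_st : stationary K mu) (mu_p : (mu *m pvec p) 0 0 = 1 / 2).
Local Notation ones := (onesv R n).
Local Notation x := (perturbed_sol K mu (fun i => 1 - p i)).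
Local Notation y := (perturbed_sol K mu p).

Lemma mu_pvec_1B : (mu *m pvec (fun i => 1 - p i)) 0 0 = 1 / 2.
Proof.
have [mu_distr _] := mu_st.
rewrite pvec_1B mulmxBr entryB distribution_mul_ones // mu_p; lra.
Qed.

Lemma rvecE : rvec K mu p = x - ones.
Proof. by rewrite /rvec /perturbed_sol /perturbed_mx pvec_1B subKr. Qed.

Lemma rtvecE : rtvec K mu p = y - ones.
Proof. by []. Qed.

Lemma perturbed_sol_sum_const : exists c, x + y = c *: ones.
Proof.
apply: (harmonic_const Kst Kuci); apply/esym/eqP.
rewrite -subr_eq0 mulmxDr opprD addrACA !perturbed_sol_defect ?mu_pvec_1B //.
by apply/eqP/matrixP=> i j; rewrite !mxE; lra.
Qed.

Lemma nu_weight : nu K mu p = 4 * (mu *m Dp p *m K *m x) 0 0.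
Proof. by rewrite /nu rvecE mulmxBr entryB weight_ones // mu_p; lra. Qed.

Lemma nut_weight : nut K mu p = 4 * (mu *m D1p p *m K *m y) 0 0.
Proof.
rewrite /nut rtvecE mulmxBr entryB (weight_ones _ _ (fun i => 1 - p i)) //.
by rewrite mu_pvec_1B; lra.
Qed.

Lemma nut_gt0 : (forall i, 0 < p i < 1) -> 0 < nut K mu p.
Proof. by move=> p01; rewrite nut_weight mulr_gt0 // perturbed_sol_gt0. Qed.

Section SumConstant.
Variables (c : R) (xy : x + y = c *: ones).

Lemma weight_sum (f : 'I_n -> R) :
  (mu *m Dp f *m K *m x) 0 0 + (mu *m Dp f *m K *m y) 0 0 = c * (mu *m pvec f) 0 0.
Proof.
have := congr1 (fun v => (mu *m Dp f *m K *m v) 0 0) xy.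
by rewrite mulmxDr entryD -scalemxAr entryZ weight_ones.
Qed.

Lemma nu_sum_const : nu K mu p = 2 * c - 2.
Proof.
have := weight_sum p; rewrite mu_p perturbed_sol_weight // nu_weight; lra.
Qed.

Lemma nut_sum_const : nut K mu p = 2 * c - 2.
Proof.
have := weight_sum (fun i => 1 - p i).
by rewrite mu_pvec_1B perturbed_sol_weight ?mu_pvec_1B // nut_weight; lra.
Qed.

Lemma eta_sum_const (eta : 'rV[R]_n) : distribution eta ->
  (eta *m rvec K mu p) 0 0 + (eta *m rtvec K mu p) 0 0 = c - 2.
Proof.
move=> eta_distr; have : x - ones + (y - ones) = (c - 2) *: ones.
  by rewrite addrACA xy -opprD scalerBl scaler_nat mulr2n.
move/(congr1 (fun v => (eta *m v) 0 0)).
by rewrite mulmxDr entryD -scalemxAr entryZ distribution_mul_ones // mulr1 rvecE.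
Qed.

End SumConstant.

Lemma nu_eq_nut : nu K mu p = nut K mu p.
Proof.
have [c xy] := perturbed_sol_sum_const.
by rewrite (nu_sum_const xy) (nut_sum_const xy).
Qed.

Lemma delta_add_deltat (eta : 'rV[R]_n) :
  (forall i, 0 < p i < 1) -> distribution eta ->
  delta K mu eta p + deltat K mu eta p = 1 - 2 / nu K mu p.
Proof.
move=> p01 eta_distr; have nu_gt0 : 0 < nu K mu p by rewrite nu_eq_nut nut_gt0.
have [c xy] := perturbed_sol_sum_const.
rewrite /delta /deltat -nu_eq_nut -mulrDl -mulrDr (eta_sum_const xy eta_distr).
rewrite (nu_sum_const xy) in nu_gt0 *.
by field; rewrite gt_eqF.
Qed.

End ComplementarySolutions.

Theorem proposition4p3 (R : realFieldType) (n : nat)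
  (K : 'M[R]_n) (mu eta : 'rV[R]_n) (p : 'I_n -> R) :
  stochastic K ->
  unique_closed_irreducible K ->
  stationary K mu ->
  (forall i, 0 < p i < 1) ->
  (mu *m pvec p) 0 0 = 1 / 2 ->
  distribution eta ->
  nu K mu p = nut K mu p /\
  delta K mu eta p + deltat K mu eta p = 1 - 2 / nu K mu p.
Proof.
move=> Kst Kuci mu_st p01 mu_p eta_distr.
by split; [apply: nu_eq_nut | apply: delta_add_deltat].
Qed.
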